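(* On the Lie algebra $\mathfrak{d}_{4,2}$ with basis $e_1,\dots,e_4$, non-zero brackets $[e_1,e_2]=e_3$, $[e_4,e_3]=e_3$, $[e_4,e_1]=2e_1$, $[e_4,e_2]=-e_2$, and orientation $\mu=e^{1234}$, let $J$ be the almost complex structure inducing the orientation $\mu$ whose space of $J$-anti-invariant 2-forms is $\Lambda^-_J=\mathrm{Span}\big((e^{12}+e^{34})+(e^{14}+e^{23}),\ e^{13}-e^{24}\big)$ (explicitly, $Je_1=\tfrac{1}{\sqrt2}(e_2-e_4)$, $Je_2=\tfrac{1}{\sqrt2}(-e_1-e_3)$, $Je_3=\tfrac{1}{\sqrt2}(e_2+e_4)$, $Je_4=\tfrac{1}{\sqrt2}(e_1-e_3)$). Then $J$ is tamed by some symplectic form on $\mathfrak{d}_{4,2}$ but is not compatible with any symplectic form on $\mathfrak{d}_{4,2}$.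
   Context: $e^1,\dots,e^4$ is the dual basis, $e^{ij}=e^i\wedge e^j$, $e^{1234}=e^1\wedge e^2\wedge e^3\wedge e^4$. A 2-form $\alpha$ is $J$-anti-invariant if $\alpha(J\cdot,J\cdot)=-\alpha$. The Chevalley–Eilenberg differential is $d\alpha(u,v)=-\alpha([u,v])$ on 1-forms, extended by Leibniz; a symplectic form is a closed non-degenerate 2-form. $J$ is tamed by $\omega$ if $\omega(u,Ju)>0$ for all $u\neq0$, and compatible with $\omega$ if tamed and $\omega(Jv,Jw)=\omega(v,w)$ for all $v,w$. *)

From Stdlib Require Import Reals Lra.
Open Scope R_scope.

(* Vectors of d_{4,2}, in coordinates w.r.t. e1,...,e4. *)
Record vec : Type := mkV { c1 : R; c2 : R; c3 : R; c4 : R }.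

Definition vzero : vec := mkV 0 0 0 0.

(* Lie bracket, extended bilinearly from
   [e1,e2]=e3, [e4,e3]=e3, [e4,e1]=2e1, [e4,e2]=-e2. *)
Definition bracket (u v : vec) : vec :=
  mkV (2 * (c4 u * c1 v - c1 u * c4 v))
      (- (c4 u * c2 v - c2 u * c4 v))
      ((c1 u * c2 v - c2 u * c1 v) + (c4 u * c3 v - c3 u * c4 v))
      0.

(* A 2-form alpha = sum_{i<j} a_ij e^{ij}. *)
Record twoform : Type := mkF { a12 : R; a13 : R; a14 : R; a23 : R; a24 : R; a34 : R }.

Definition ev (w : twoform) (u v : vec) : R :=
  a12 w * (c1 u * c2 v - c2 u * c1 v) + a13 w * (c1 u * c3 v - c3 u * c1 v)
+ a14 w * (c1 u * c4 v - c4 u * c1 v) + a23 w * (c2 u * c3 v - c3 u * c2 v)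
+ a24 w * (c2 u * c4 v - c4 u * c2 v) + a34 w * (c3 u * c4 v - c4 u * c3 v).

(* Chevalley-Eilenberg differential of a 2-form:
   dw(x,y,z) = - w([x,y],z) + w([x,z],y) - w([y,z],x). *)
Definition d2 (w : twoform) (x y z : vec) : R :=
  - ev w (bracket x y) z + ev w (bracket x z) y - ev w (bracket y z) x.

Definition closed (w : twoform) : Prop := forall x y z, d2 w x y z = 0.

Definition nondegenerate (w : twoform) : Prop :=
  forall u, u <> vzero -> exists v, ev w u v <> 0.

Definition symplectic (w : twoform) : Prop := closed w /\ nondegenerate w.

(* The almost complex structure J:
   Je1 = (e2 - e4)/sqrt2, Je2 = (-e1 - e3)/sqrt2,
   Je3 = (e2 + e4)/sqrt2, Je4 = (e1 - e3)/sqrt2, extended linearly. *)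
Definition J (u : vec) : vec :=
  mkV ((- c2 u + c4 u) / sqrt 2)
      ((c1 u + c3 u) / sqrt 2)
      ((- c2 u - c4 u) / sqrt 2)
      ((- c1 u + c3 u) / sqrt 2).

Definition tamed (w : twoform) (K : vec -> vec) : Prop :=
  forall u, u <> vzero -> ev w u (K u) > 0.

Definition compatible (w : twoform) (K : vec -> vec) : Prop :=
  tamed w K /\ forall v x, ev w (K v) (K x) = ev w v x.

(* The closed 2-forms are exactly those with a13 = 0 and a12 + a34 = 0.
   Among them, w = -(e^14 + e^23) satisfies w(u, Ju) = |u|^2 / sqrt 2, so it
   tames J.  If a closed w were J-invariant, then w(e1, e2) = w(Je1, Je2)
   forces a12 + a14 + a23 + a34 = 0, hence a14 + a23 = 0; but
   w(e2, Je2) + w(e4, Je4) = ((a12 + a34) - (a14 + a23)) / sqrt 2 would then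
   vanish, so w cannot tame J. *)

From Stdlib Require Import Reals Lra Psatz.
Open Scope R_scope.

Definition e1 : vec := mkV 1 0 0 0.
Definition e2 : vec := mkV 0 1 0 0.
Definition e3 : vec := mkV 0 0 1 0.
Definition e4 : vec := mkV 0 0 0 1.

Lemma sqrt2_pos : 0 < sqrt 2.
Proof. apply sqrt_lt_R0; lra. Qed.

Lemma tamed_nondegenerate (w : twoform) (K : vec -> vec) :
  tamed w K -> nondegenerate w.
Proof.
  intros Htame u Hu; exists (K u).
  specialize (Htame u Hu); lra.
Qed.

Lemma closed_iff (w : twoform) :
  closed w <-> a13 w = 0 /\ a12 w + a34 w = 0.
Proof.
  split.
  - intros Hw.
    pose proof (Hw e1 e2 e4) as H124; pose proof (Hw e1 e3 e4) as H134.
    destruct w; unfold d2, ev, bracket, e1, e2, e3, e4 in *; simpl in *.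
    split; lra.
  - destruct w as [b12 b13 b14 b23 b24 b34]; simpl.
    intros [-> Hb34] x y z.
    replace b34 with (- b12) by lra.
    unfold d2, ev, bracket; simpl; ring.
Qed.

Lemma vec_nonzero_norm2_pos (u : vec) :
  u <> vzero -> 0 < c1 u ^ 2 + c2 u ^ 2 + c3 u ^ 2 + c4 u ^ 2.
Proof.
  destruct u as [x1 x2 x3 x4]; simpl; intros Hu.
  destruct (Rle_lt_dec (x1 ^ 2 + x2 ^ 2 + x3 ^ 2 + x4 ^ 2) 0) as [Hle | Hlt];
    [| exact Hlt].
  exfalso; apply Hu; unfold vzero; f_equal; nra.
Qed.

Definition w_tame : twoform := mkF 0 0 (-1) (-1) 0 0.

Lemma ev_w_tame_J (u : vec) :
  ev w_tame u (J u) = (c1 u ^ 2 + c2 u ^ 2 + c3 u ^ 2 + c4 u ^ 2) / sqrt 2.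
Proof. destruct u; unfold ev, J, w_tame; simpl; field; apply Rgt_not_eq, sqrt2_pos. Qed.

Lemma w_tame_symplectic_tames_J : symplectic w_tame /\ tamed w_tame J.
Proof.
  assert (Htame : tamed w_tame J).
  { intros u Hu; rewrite ev_w_tame_J.
    apply Rdiv_lt_0_compat; [apply vec_nonzero_norm2_pos, Hu | apply sqrt2_pos]. }
  split; [split |]; [| exact (tamed_nondegenerate _ _ Htame) | exact Htame].
  apply closed_iff; simpl; lra.
Qed.

Lemma ev_J_e1_J_e2 (w : twoform) :
  ev w (J e1) (J e2) = (a12 w - a14 w - a23 w - a34 w) / 2.
Proof.
  assert (Hinv2 : / 2 = / sqrt 2 * / sqrt 2)
    by (rewrite <- Rinv_mult, sqrt_sqrt; lra).
  destruct w; unfold ev, J, e1, e2, Rdiv; simpl.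
  rewrite Hinv2; ring.
Qed.

Lemma J_invariant_sum (w : twoform) :
  (forall v x, ev w (J v) (J x) = ev w v x) ->
  a12 w + a14 w + a23 w + a34 w = 0.
Proof.
  intros Hinv; specialize (Hinv e1 e2).
  rewrite ev_J_e1_J_e2 in Hinv.
  destruct w; unfold ev, e1, e2 in Hinv; simpl in *; lra.
Qed.

Lemma ev_J_e2_add_ev_J_e4 (w : twoform) :
  ev w e2 (J e2) + ev w e4 (J e4) = ((a12 w + a34 w) - (a14 w + a23 w)) / sqrt 2.
Proof. destruct w; unfold ev, J, e2, e4; simpl; field; apply Rgt_not_eq, sqrt2_pos. Qed.

Lemma no_compatible_symplectic (w : twoform) :
  symplectic w -> ~ compatible w J.
Proof.
  intros [Hclosed _] [Htame Hinv].
  apply closed_iff in Hclosed as [_ Hclosed_sum].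
  apply J_invariant_sum in Hinv.
  assert (Hsum := ev_J_e2_add_ev_J_e4 w).
  replace ((a12 w + a34 w) - (a14 w + a23 w)) with 0 in Hsum by lra.
  unfold Rdiv in Hsum; rewrite Rmult_0_l in Hsum.
  assert (H2 : ev w e2 (J e2) > 0)
    by (apply Htame; unfold e2, vzero; intros H; injection H; lra).
  assert (H4 : ev w e4 (J e4) > 0)
    by (apply Htame; unfold e4, vzero; intros H; injection H; lra).
  lra.
Qed.

Theorem mainTheorem4 :
  (exists w : twoform, symplectic w /\ tamed w J) /\
  ~ (exists w : twoform, symplectic w /\ compatible w J).
Proof.
  split.
  - exists w_tame; exact w_tame_symplectic_tames_J.
  - intros [w [Hsymp Hcompat]]; exact (no_compatible_symplectic w Hsymp Hcompat).
Qed.
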